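(* Let $G, H$ and $G_1,\dots,G_n$ be abelian groups with tiles $T \subset G$ and $U_i \subset G_i$, and let $\rho : G \to H$ be a surjective homomorphism that is injective on $T$. If $G_1\times\dots\times G_n\times H$ is $(U_1,\dots,U_n,\rho(T))$-tilable, then $G_1\times\dots\times G_n\times G$ is $(U_1,\dots,U_n,T)$-tilable.
   Context: A tile in an abelian group is a non-empty subset. Given abelian groups $K_1,\dots,K_r$ and tiles $V_j\subset K_j$, let $\mathsf{V}_j \subset K_1\times\dots\times K_r$ be the set of points whose $j$-th coordinate lies in $V_j$ and whose other coordinates are $0$. A copy of $V_j$ is a translate $\mathsf{V}_j + x$ with $x \in K_1\times\dots\times K_r$. A subset of $K_1\times\dots\times K_r$ is $(V_1,\dots,V_r)$-tilable if it is a disjoint union of copies of $V_1,\dots,V_r$. *)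

From HB Require Import structures.
From mathcomp Require Import all_boot all_algebra.
Set Implicit Arguments. Unset Strict Implicit. Unset Printing Implicit Defensive.
Import GRing.Theory.
Local Open Scope ring_scope.

Definition tile (K : zmodType) (V : K -> Prop) : Prop := exists v, V v.

Definition prodpt (r : nat) (K : 'I_r -> zmodType) := forall i : 'I_r, K i.

Definition embed_tile (r : nat) (K : 'I_r -> zmodType)
  (V : forall j : 'I_r, K j -> Prop) (j : 'I_r) : prodpt K -> Prop :=
  fun x => V j (x j) /\ (forall i : 'I_r, i != j -> x i = 0).

Definition copy (r : nat) (K : 'I_r -> zmodType)
  (V : forall j : 'I_r, K j -> Prop) (j : 'I_r) (a : prodpt K) : prodpt K -> Prop :=
  fun x => embed_tile V j (fun i => x i - a i).

Definition tilable (r : nat) (K : 'I_r -> zmodType)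
  (V : forall j : 'I_r, K j -> Prop) (A : prodpt K -> Prop) : Prop :=
  exists C : {j : 'I_r & prodpt K} -> Prop,
    [/\ (forall c, C c -> forall x, copy V (tag c) (tagged c) x -> A x),
        (forall x, A x -> exists c, C c /\ copy V (tag c) (tagged c) x) &
        (forall c c' x, C c -> C c' ->
           copy V (tag c) (tagged c) x -> copy V (tag c') (tagged c') x -> c = c')].

(* The family G_1, ..., G_n, H indexed by 'I_n.+1 (last index = H). *)
Definition ext_fam (n : nat) (Gs : 'I_n -> zmodType) (H : zmodType)
  : 'I_n.+1 -> zmodType :=
  fun i => if unlift ord_max i is Some j then Gs j else H.

Definition ext_tiles (n : nat) (Gs : 'I_n -> zmodType) (H : zmodType)
  (U : forall j : 'I_n, Gs j -> Prop) (T : H -> Prop)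
  : forall i : 'I_n.+1, ext_fam Gs H i -> Prop :=
  fun i => match unlift ord_max i as o
             return (if o is Some j then Gs j else H) -> Prop with
           | Some j => U j
           | None => T
           end.

Definition img (A B : Type) (f : A -> B) (T : A -> Prop) : B -> Prop :=
  fun y => exists x, T x /\ f x = y.

From HB Require Import structures.
From mathcomp Require Import all_boot all_algebra.
From Stdlib Require Import ClassicalEpsilon FunctionalExtensionality.
Set Implicit Arguments. Unset Strict Implicit. Unset Printing Implicit Defensive.
Import GRing.Theory.
Local Open Scope ring_scope.

(* The coordinatewise map [id x ... x id x rho] sends every copy of a source
   tile onto the corresponding copy of its image tile, so a tiling of the
   target pulls back to the family of copies whose images lie in it.  These
   pulled-back copies cover, because every copy of [rho(T)] through [rho x]
   lifts to a copy of [T] through [x]; they are disjoint, because two copies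
   [T + b], [T + b'] through [x] with [rho b = rho b'] have offsets [x - b],
   [x - b'] in [T] with the same image, which injectivity on [T] identifies. *)

Lemma dependent_functional_choice (I : Type) (K : I -> Type)
    (P : forall i, K i -> Prop) :
  (forall i, exists u, P i u) -> exists b : forall i, K i, forall i, P i (b i).
Proof.
move=> ex; exists (fun i => proj1_sig (constructive_indefinite_description _ (ex i))).
by move=> i; exact: proj2_sig.
Qed.

Section TilablePullback.

(* The coordinate [i] stays an explicit argument of [f], [V] and [W]. *)
Unset Implicit Arguments.
Variables (r : nat) (K L : 'I_r -> zmodType) (f : forall i, K i -> L i).
Variables (V : forall i, K i -> Prop) (W : forall i, L i -> Prop).
Set Implicit Arguments.
Hypothesis fB : forall i (x y : K i), f i (x - y) = f i x - f i y.
Hypothesis f_tile : forall i x, V i x -> W i (f i x).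
Hypothesis f_tile_onto : forall i y, W i y -> exists2 x, V i x & f i x = y.
Hypothesis f_tile_inj :
  forall i x y, V i x -> V i y -> f i x = f i y -> x = y.

Definition prodmap (x : prodpt K) : prodpt L := fun i => f i (x i).

Lemma f0 i : f i 0 = 0.
Proof. by rewrite -(subrr 0) fB subrr. Qed.

Lemma copy_prodmap j a x : copy V j a x -> copy W j (prodmap a) (prodmap x).
Proof.
move=> [Vj off]; split; first by rewrite /prodmap -fB; exact: f_tile.
by move=> i /off e; rewrite /prodmap -fB e f0.
Qed.

Lemma copy_prodmap_lift j a x :
  copy W j a (prodmap x) -> exists2 b, prodmap b = a & copy V j b x.
Proof.
move=> [Wj off]; have [v Vv fv] := f_tile_onto Wj.
(* Testing [i == j] keeps the condition at [j] well typed at every [i]. *)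
have coord i : exists u : K i,
    f i u = a i /\ (if i == j then V i (x i - u) else x i = u).
  case: (eqVneq i j) => [->|ne].
    by exists (x j - v); rewrite subKr fB fv subKr.
  exists (x i); split=> //; apply: subr0_eq; exact: off.
have [b bP] := dependent_functional_choice coord.
exists b; first by apply: functional_extensionality_dep => i; case: (bP i).
split; first by have [_] := bP j; rewrite eqxx.
by move=> i ne; have [_] := bP i; rewrite (negbTE ne) => ->; rewrite subrr.
Qed.

Lemma prodmap_copy_inj j b b' x :
  copy V j b x -> copy V j b' x -> prodmap b = prodmap b' -> b = b'.
Proof.
move=> [Vb off] [Vb' off'] e; apply: functional_extensionality_dep => i.
case: (eqVneq i j) => [->|ne].
  apply: oppr_inj; apply: (addrI (x j)); apply: (f_tile_inj Vb Vb').
  by rewrite !fB; congr (_ - _); exact: (congr1 (fun y => y j) e).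
by rewrite -(subr0_eq (off i ne)) (subr0_eq (off' i ne)).
Qed.

Lemma tilable_pullback :
  tilable W (fun _ => True) -> tilable V (fun _ => True).
Proof.
move=> [C [_ cover disj]].
exists (fun c => C (existT _ (tag c) (prodmap (tagged c)))); split=> //.
- move=> x _; have [[j a] [Ca xa]] := cover (prodmap x) I.
  have [b ba xb] := copy_prodmap_lift xa.
  by exists (existT _ j b); rewrite /= ba.
- move=> [j b] [j' b'] x /= Cb Cb' xb xb'.
  have [ej eb] := disj _ _ _ Cb Cb' (copy_prodmap xb) (copy_prodmap xb').
  subst j'; congr existT; exact: prodmap_copy_inj xb xb' eb.
Qed.

End TilablePullback.

Section ExtendedFamily.

Variables (n : nat) (Gs : 'I_n -> zmodType) (G H : zmodType).
Variables (U : forall j : 'I_n, Gs j -> Prop) (T : G -> Prop).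
Variable rho : {additive G -> H}.

Definition ext_map (i : 'I_n.+1) : ext_fam Gs G i -> ext_fam Gs H i :=
  match unlift ord_max i as o
    return (if o is Some j then Gs j else G) -> (if o is Some j then Gs j else H)
  with
  | Some j => id
  | None => rho
  end.
Arguments ext_map : clear implicits.

Lemma ext_mapB i (x y : ext_fam Gs G i) :
  ext_map i (x - y) = ext_map i x - ext_map i y.
Proof.
rewrite /ext_map /ext_fam in x y *; case: (unlift ord_max i) x y => [j|] x y //=.
exact: raddfB.
Qed.

Lemma ext_map_tile i (x : ext_fam Gs G i) :
  ext_tiles U T x -> ext_tiles U (img rho T) (ext_map i x).
Proof.
rewrite /ext_map /ext_tiles /ext_fam in x *.
by case: (unlift ord_max i) x => [j|] x //= Tx; exists x.
Qed.

Lemma ext_map_tile_onto i (y : ext_fam Gs H i) :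
  ext_tiles U (img rho T) y -> exists2 x, ext_tiles U T x & ext_map i x = y.
Proof.
rewrite /ext_map /ext_tiles /ext_fam in y *.
case: (unlift ord_max i) y => [j|] y /=; first by exists y.
by case=> x [Tx <-]; exists x.
Qed.

Lemma ext_map_tile_inj i (x y : ext_fam Gs G i) :
  (forall x y : G, T x -> T y -> rho x = rho y -> x = y) ->
  ext_tiles U T x -> ext_tiles U T y -> ext_map i x = ext_map i y -> x = y.
Proof.
rewrite /ext_map /ext_tiles /ext_fam in x y *.
by case: (unlift ord_max i) x y => [j|] x y //= rho_inj; apply: rho_inj.
Qed.

End ExtendedFamily.

Theorem proposition17 (n : nat) (Gs : 'I_n -> zmodType) (G H : zmodType)
  (U : forall j : 'I_n, Gs j -> Prop) (T : G -> Prop)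
  (rho : {additive G -> H}) :
  (forall j, tile (U j)) -> tile T ->
  (forall h : H, exists g : G, rho g = h) ->
  (forall x y : G, T x -> T y -> rho x = rho y -> x = y) ->
  tilable (ext_tiles U (img rho T)) (fun _ => True) ->
  tilable (ext_tiles U T) (fun _ => True).
Proof.
move=> _ _ _ rho_inj.
apply: (tilable_pullback (ext_mapB rho)).
- exact: ext_map_tile.
- exact: ext_map_tile_onto.
- by move=> i x y; apply: ext_map_tile_inj.
Qed.
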